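(* Let $a, b$ be positive integers with $b>1$ and let $i \ge 3$ be an integer with $\gcd(r_b(i),a)=1$. Then $\omega \in \operatorname{Ap}(S_a(b,i))$ if and only if either $\omega = b\, a^{(i)}_i$, or there exist $(u_2,\ldots,u_{i-1}) \in R(b,i-1)$ and $u_i \in \{0,\ldots,b-1\}$ such that \[\omega = \sum_{j=2}^{i-1} u_j a^{(i-1)}_j + b^{i-1}\Big(\sum_{j=2}^{i-1} u_j\Big) + u_i\, a^{(i)}_i.\]
   Context: For $\ell \ge 1$, $r_b(\ell) = \sum_{j=0}^{\ell-1} b^j$, and $r_b(0)=0$. For integers $m\ge 2$ and $j\ge 1$, $a^{(m)}_j := r_b(m) + a\, r_b(j-1)$, and $S_a(b,m)$ is the submonoid of $\mathbb{N}$ generated by $\{a^{(m)}_j : j\ge 1\}$. $\operatorname{Ap}(S) = \{\omega\in S : \omega - \operatorname{m}(S) \notin S\}$ where $\operatorname{m}(S)$ is the smallest nonzero element of $S$. For $m\ge 2$, $R(b,m)$ is the set of $(u_2,\ldots,u_m) \in \mathbb{N}^{m-1}$ with $0 \le u_j \le b$ for all $j$, and such that $u_j = b$ implies $u_k = 0$ for all $2\le k<j$. *)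

From mathcomp Require Import all_boot.
Set Implicit Arguments. Unset Strict Implicit. Unset Printing Implicit Defensive.

Definition rb (b l : nat) : nat := \sum_(0 <= j < l) b ^ j.

Definition agen (a b m j : nat) : nat := rb b m + a * rb b j.-1.

Inductive inS (a b m : nat) : nat -> Prop :=
  | inS0 : inS a b m 0
  | inS_add x j : 1 <= j -> inS a b m x -> inS a b m (x + agen a b m j).

Definition is_mult (S : nat -> Prop) (n : nat) : Prop :=
  S n /\ 0 < n /\ (forall x, S x -> 0 < x -> n <= x).

(* Apery set w.r.t. the multiplicity m(S):
   w \in S and w - m(S) \notin S (as an integer; a negative number is
   never in S, hence the condition m <= w). *)
Definition Ap (S : nat -> Prop) (w : nat) : Prop :=
  S w /\ exists n, is_mult S n /\ ~ (n <= w /\ S (w - n)).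

(* R(b,m): (u_2,...,u_m) with 0 <= u_j <= b and u_j = b -> u_k = 0 for
   2 <= k < j.  Tuples are represented by u : nat -> nat, only the
   indices 2..m being relevant. *)
Definition inR (b m : nat) (u : nat -> nat) : Prop :=
  forall j, 2 <= j <= m ->
    u j <= b /\ (u j = b -> forall k, 2 <= k < j -> u k = 0).

From mathcomp Require Import all_boot zify.
Set Implicit Arguments. Unset Strict Implicit. Unset Printing Implicit Defensive.

(* The multiplicity of S = S_a(b,m) is r = r_b(m) = a^(m)_1, and every element
   of S is r * C + a * N with N a sum of at most C repunits r_b(j).  The greedy
   decomposition of n < r into r_b(m-1), ..., r_b(1) uses the fewest parts:
   adding one repunit raises the greedy count g by at most one, and does not
   raise it at all when the sum overflows r, an overflow which costs r * a.
   Hence the element of Ap(S) congruent to a * n is r * g(n) + a * n, and since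
   gcd(r, a) = 1 these are all of Ap(S).  The greedy digit strings of the n < r
   are exactly the tuples of R(b,m), with g the digit sum; splitting off the
   leading digit u_m (equal to b, or below b) gives the two cases. *)

Section Repunits.

Variable b : nat.

Lemma rb0 : rb b 0 = 0.
Proof. by rewrite /rb big_geq. Qed.

Lemma rb1 : rb b 1 = 1.
Proof. by rewrite /rb big_nat1. Qed.

Lemma rbD x y : rb b (x + y) = rb b x + b ^ x * rb b y.
Proof.
rewrite /rb (@big_cat_nat _ _ _ x) ?leq_addr //=; congr (_ + _).
rewrite -{1}(add0n x) big_addn addKn big_distrr /=.
by apply: eq_bigr => j _; rewrite expnD mulnC.
Qed.

Lemma rbS x : rb b x.+1 = b * rb b x + 1.
Proof. by rewrite -add1n rbD rb1 expn1 addnC. Qed.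

Lemma rbSr x : rb b x.+1 = rb b x + b ^ x.
Proof. by rewrite -addn1 rbD rb1 muln1. Qed.

Lemma rb_gt0 k : 0 < k -> 0 < rb b k.
Proof. by case: k => // k _; rewrite rbS addn1. Qed.

Lemma leq_rb m n : m <= n -> rb b m <= rb b n.
Proof. by move/subnKC <-; rewrite rbD leq_addr. Qed.

Lemma rb_edivn K n : exists q n', n' < rb b K.+1 /\ n = q * rb b K.+1 + n'.
Proof.
exists (n %/ rb b K.+1), (n %% rb b K.+1).
by rewrite ltn_pmod ?rb_gt0 // -divn_eq.
Qed.

Lemma rb_lead_digit K q n : q * rb b K.+1 + n < rb b K.+2 -> q < b \/ q = b /\ n = 0.
Proof.
rewrite (rbS K.+1); case: (ltngtP q b) => [| lt_bq | ->]; [by left | | lia].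
have := rb_gt0 (ltn0Sn K); have := leq_mul lt_bq (leqnn (rb b K.+1)); rewrite mulSn; lia.
Qed.

Hypothesis b_gt0 : 0 < b.

Lemma ltn_rb m n : m < n -> rb b m < rb b n.
Proof.
move=> lt_mn; have := leq_rb lt_mn; rewrite rbSr; have := expn_gt0 b m; rewrite b_gt0 /=; lia.
Qed.

End Repunits.

Definition rvalue (b K : nat) (u : nat -> nat) : nat := \sum_(2 <= j < K.+2) u j * rb b j.-1.

Lemma rvalue_eq0 b K u : rvalue b K u = 0 <-> forall k, 2 <= k < K.+2 -> u k = 0.
Proof.
split => [/eqP | u0]; last by rewrite /rvalue big_nat_cond big1 // => k /andP [/u0 -> _].
rewrite /rvalue sum_nat_seq_eq0 => /allP u0 k k_range.
have := u0 k; rewrite mem_index_iota k_range muln_eq0 => /(_ isT) /orP [/eqP //|].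
by rewrite eqn0Ngt rb_gt0 //; case/andP: k_range; case: k.
Qed.

Lemma rvalueS b K u : rvalue b K.+1 u = rvalue b K u + u K.+2 * rb b K.+1.
Proof. by rewrite /rvalue big_nat_recr. Qed.

Lemma inRS b K u : inR b K.+2 u <->
  [/\ inR b K.+1 u, u K.+2 <= b & u K.+2 = b -> forall k, 2 <= k < K.+2 -> u k = 0].
Proof.
split=> [uR | [uR le_top top_zero] j /andP [j_ge2]].
  by have [top_le top_zero] := uR K.+2 (leqnn _); split=> // j j_range; apply: uR; lia.
by rewrite leq_eqVlt => /predU1P [-> // | lt_j]; apply: uR; rewrite j_ge2.
Qed.

Lemma rvalue_lt b K u : inR b K.+1 u -> rvalue b K u < rb b K.+1.
Proof.
elim: K u => [|K IHK] u; first by rewrite /rvalue big_geq // rb1.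
case/inRS => uR le_top top_zero; rewrite rvalueS (rbS b K.+1).
have := IHK u uR; case: (ltngtP (u K.+2) b) le_top => // [lt_top | eq_top] _ lt_val.
  by have := leq_mul lt_top (leqnn (rb b K.+1)); rewrite mulSn; lia.
rewrite (rvalue_eq0 _ _ _).2; [lia | exact: top_zero].
Qed.

Lemma rvalue_onto b K n : n < rb b K.+1 -> exists2 u, inR b K.+1 u & n = rvalue b K u.
Proof.
elim: K n => [|K IHK] n.
  rewrite rb1 ltnS leqn0 => /eqP ->.
  by exists (fun=> 0); [move=> j; lia | rewrite /rvalue big_geq].
have [q [n' [lt_n' ->]]] := rb_edivn b K n => lt_n.
have [u' u'R en'] := IHK n' lt_n'; subst n'.
pose u j := if j == K.+2 then q else u' j.
have val_u : rvalue b K u = rvalue b K u'.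
  by apply: eq_big_nat => j j_range; rewrite /u ifN //; lia.
exists u; last by rewrite rvalueS val_u /u eqxx addnC.
have u_top : u K.+2 = q by rewrite /u eqxx.
apply/inRS; split; rewrite ?u_top.
- move=> j j_range; have [le_j j_zero] := u'R j j_range.
  rewrite /u ifN; last by lia.
  split=> // /j_zero low_zero k k_range; rewrite ifN ?low_zero //; lia.
- by case: (rb_lead_digit lt_n) => [/ltnW | [->]].
- move=> eq_qb k k_range; rewrite /u ifN; last by lia.
  case: (rb_lead_digit lt_n) => [| [_ val0]]; first by rewrite eq_qb ltnn.
  exact: (rvalue_eq0 _ _ _).1 val0 k k_range.
Qed.

Section Greedy.

Variable b : nat.
Hypothesis b_gt0 : 0 < b.

Fixpoint greedy (K n : nat) : nat :=
  if K is K'.+1 then n %/ rb b K + greedy K' (n %% rb b K) else n.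

Lemma greedy0 K : greedy K 0 = 0.
Proof. by elim: K => //= K IHK; rewrite div0n mod0n IHK. Qed.

Lemma greedyS K q n : n < rb b K.+1 -> greedy K.+1 (q * rb b K.+1 + n) = q + greedy K n.
Proof.
move=> lt_n /=; have rb_pos := rb_gt0 b (ltn0Sn K).
by rewrite divnMDl // modnMDl divn_small // modn_small // addn0.
Qed.

Lemma greedyS_small K n : n < rb b K.+1 -> greedy K.+1 n = greedy K n.
Proof. by move=> lt_n; have := greedyS 0 lt_n; rewrite mul0n !add0n. Qed.

Lemma greedy_mul_rb K m : m <= K -> greedy K (b * rb b m) <= b.
Proof.
elim: K m => [|K IHK] m; first by rewrite leqn0 => /eqP ->; rewrite rb0 muln0.
rewrite leq_eqVlt => /predU1P [->|lt_mK].
  by rewrite -[_ * _]addn0 greedyS ?rb_gt0 // greedy0 addn0.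
rewrite greedyS_small ?IHK //.
by apply: leq_trans (leq_rb b lt_mK); rewrite rbS addn1.
Qed.

Lemma greedy_succ K t : greedy K t < greedy K t.+1 + b.
Proof.
elim: K t => [|K IHK] t; first by rewrite /greedy; lia.
have [q [n [lt_n ->]]] := rb_edivn b K t.
have [lt_n1 | le_n1] := ltnP n.+1 (rb b K.+1).
  by rewrite -addnS !greedyS //; have := IHK n; lia.
have en : n = b * rb b K by move: lt_n le_n1; rewrite rbS; lia.
rewrite {}en in lt_n *.
have -> : (q * rb b K.+1 + b * rb b K).+1 = q.+1 * rb b K.+1 + 0 by rewrite mulSn rbS; lia.
rewrite !greedyS ?rb_gt0 // greedy0.
by have := greedy_mul_rb (leqnn K); lia.
Qed.

Lemma greedy_wrap K k n : 0 < k <= K -> n < rb b K.+1 -> rb b K.+1 <= n + rb b k ->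
  greedy K (n + rb b k - rb b K.+1) <= greedy K n.
Proof.
elim: K k n => [|K IHK] k n; first by lia.
move=> /andP [k_gt0 le_kK] lt_n le_wrap.
have [q [n' [lt_n' en]]] := rb_edivn b K n; subst n.
have W_gt0 := rb_gt0 b (ltn0Sn K); set W := rb b K.+1 in lt_n' W_gt0 *.
have rbk : rb b k = b * rb b k.-1 + 1 by rewrite -rbS prednK.
case: (rb_lead_digit lt_n) => [lt_qb | [-> ->]]; rewrite (rbS b K.+1) -/W in le_wrap *.
  have le_kW : rb b k <= W := leq_rb b le_kK.
  have eq_qb : q.+1 = b.
    apply/eqP; rewrite eqn_leq lt_qb leqNgt; apply/negP => lt_q1b.
    by have := leq_mul lt_q1b (leqnn W); rewrite !mulSn; lia.
  have bW : b * W = W + q * W by rewrite -eq_qb mulSn.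
  rewrite bW in le_wrap *; set t := n' + rb b k - W; have et : t = n' + rb b k - W := erefl.
  have le_t : greedy K t <= greedy K n'.
    have [eq_kK | lt_kK] := eqVneq k K.+1; first by rewrite et eq_kK addnK.
    by apply: IHK => //; [rewrite k_gt0 -ltnS ltn_neqAle lt_kK | lia].
  have -> : q * W + n' + rb b k - (W + q * W + 1) = t.-1 by lia.
  rewrite greedyS_small; last by lia.
  rewrite greedyS //; have := greedy_succ K t.-1.
  by rewrite prednK; lia.
have -> : b * W + 0 + rb b k - (b * W + 1) = b * rb b k.-1 by lia.
rewrite greedyS ?greedy0 // addn0; apply: greedy_mul_rb; lia.
Qed.

Lemma greedy_add_rb K k n : 0 < k <= K -> greedy K (n + rb b k) <= greedy K n + 1.
Proof.
elim: K k n => [|K IHK] k n; first by lia.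
move=> /andP [k_gt0 le_kK].
have [q [n' [lt_n' ->]]] := rb_edivn b K n.
have W_gt0 := rb_gt0 b (ltn0Sn K); set W := rb b K.+1 in lt_n' W_gt0 *.
rewrite greedyS //.
have [eq_kK | lt_kK] := eqVneq k K.+1.
  have -> : q * W + n' + rb b k = q.+1 * W + n' by rewrite eq_kK mulSn; lia.
  by rewrite greedyS //; lia.
have le_kK' : 0 < k <= K by rewrite k_gt0 -ltnS ltn_neqAle lt_kK.
have [lt_sum | le_sum] := ltnP (n' + rb b k) W.
  by rewrite -addnA greedyS //; have := IHK k n' le_kK'; lia.
have -> : q * W + n' + rb b k = q.+1 * W + (n' + rb b k - W) by rewrite mulSn; lia.
have le_kW : rb b k <= W := leq_rb b le_kK.
rewrite greedyS; last by lia.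
by have := greedy_wrap le_kK' lt_n' le_sum; rewrite -/W; lia.
Qed.

Lemma greedy_rvalue K u : inR b K.+1 u -> greedy K (rvalue b K u) = \sum_(2 <= j < K.+2) u j.
Proof.
elim: K u => [|K IHK] u; first by rewrite /rvalue !big_geq // greedy0.
case/inRS => uR _ _.
by rewrite rvalueS addnC greedyS ?rvalue_lt // IHK // [RHS]big_nat_recr // addnC.
Qed.

End Greedy.

Lemma is_mult_uniq (S : nat -> Prop) n n' : is_mult S n -> is_mult S n' -> n = n'.
Proof.
move=> [Sn [n_gt0 n_min]] [Sn' [n'_gt0 n'_min]].
by apply/eqP; rewrite eqn_leq n_min // n'_min.
Qed.

Section Generators.

Variables a b m : nat.

Lemma agen1 : agen a b m 1 = rb b m.
Proof. by rewrite /agen rb0 muln0 addn0. Qed.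

Lemma agen_addm j : 0 < j -> agen a b m (j + m) = agen a b m j + a * b ^ j.-1 * rb b m.
Proof. by case: j => // j _; rewrite /agen addSn /= rbD; lia. Qed.

Lemma inS_addn x y : inS a b m x -> inS a b m y -> inS a b m (x + y).
Proof.
move=> Sx; elim=> [|z j j_gt0 _ Sxz]; first by rewrite addn0.
by rewrite addnA; apply: inS_add.
Qed.

Lemma inS_mul_agen c j : 0 < j -> inS a b m (c * agen a b m j).
Proof.
move=> j_gt0; elim: c => [|c IHc]; first exact: inS0.
by rewrite mulSn addnC; apply: inS_add.
Qed.

Lemma inS_mul_rb c : inS a b m (c * rb b m).
Proof. by rewrite -agen1; apply: inS_mul_agen. Qed.

Lemma is_mult_rb : 0 < m -> is_mult (inS a b m) (rb b m).
Proof.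
move=> m_gt0; split; first by rewrite -[rb b m]mul1n; apply: inS_mul_rb.
split; first exact: rb_gt0.
by move=> x; elim=> // y j _ _ _ _; rewrite /agen addnCA leq_addr.
Qed.

End Generators.

Lemma eqn_modMl_coprime d a n n' : coprime d a -> (a * n == a * n' %[mod d]) = (n == n' %[mod d]).
Proof.
move=> co_da; wlog le_n'n : n n' / n' <= n.
  move=> wlog_le; case: (leqP n' n) => [|/ltnW le_nn']; first exact: wlog_le.
  by rewrite eq_sym [RHS]eq_sym wlog_le.
by rewrite !eqn_mod_dvd ?leq_mul2l ?le_n'n ?orbT // -mulnBr Gauss_dvdr.
Qed.

Section Apery.

Variables a b K : nat.
Hypothesis b_gt0 : 0 < b.

Local Notation S := (inS a b K.+1).
Local Notation r := (rb b K.+1).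

Definition ap_elt n := r * greedy b K n + a * n.

Lemma inS_greedy K' n : S (r * greedy b K' n + a * n).
Proof.
elim: K' n => [|K' IHK] n.
  have -> : r * greedy b 0 n + a * n = n * agen a b K.+1 2 by rewrite /agen /= rb1; lia.
  exact: inS_mul_agen.
have [q [n' [lt_n' ->]]] := rb_edivn b K' n; rewrite greedyS //.
have -> : r * (q + greedy b K' n') + a * (q * rb b K'.+1 + n') =
          (r * greedy b K' n' + a * n') + q * agen a b K.+1 K'.+2 by rewrite /agen /=; lia.
by apply: inS_addn => //; apply: inS_mul_agen.
Qed.

Lemma ap_elt_add_agen_small k n : k <= K -> n < r ->
  exists n' c, n' < r /\ ap_elt n + agen a b K.+1 k.+1 = ap_elt n' + c * r.
Proof.
move=> le_kK lt_n; rewrite /ap_elt /agen /=.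
case: (posnP k) => [-> | k_gt0]; first by exists n, 1; rewrite rb0; lia.
have kR : 0 < k <= K by rewrite k_gt0.
have [lt_sum | le_sum] := ltnP (n + rb b k) r.
  exists (n + rb b k), (greedy b K n + 1 - greedy b K (n + rb b k)); split=> //.
  have := leq_mul (greedy_add_rb b_gt0 n kR) (leqnn r).
  by rewrite mulnBl !mulnDl mulnDr; lia.
have lt_k : rb b k < r by apply: ltn_rb.
exists (n + rb b k - r), (greedy b K n + 1 + a - greedy b K (n + rb b k - r)); split; first lia.
have := leq_mul (greedy_wrap b_gt0 kR lt_n le_sum) (leqnn r).
have : a * (n + rb b k - r) + a * r = a * n + a * rb b k by rewrite -!mulnDr subnK.
by rewrite mulnBl !mulnDl; lia.
Qed.

Lemma ap_elt_add_agen j n : 0 < j -> n < r ->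
  exists n' c, n' < r /\ ap_elt n + agen a b K.+1 j = ap_elt n' + c * r.
Proof.
elim/ltn_ind: j n => j IHj n j_gt0 lt_n.
have [le_jK | lt_Kj] := leqP j K.+1.
  by rewrite -(prednK j_gt0); apply: ap_elt_add_agen_small; rewrite // -ltnS prednK.
have lt_j'j : j - K.+1 < j by lia.
have j'_gt0 : 0 < j - K.+1 by rewrite subn_gt0.
have [n' [c [lt_n' e]]] := IHj _ lt_j'j n j'_gt0 lt_n.
exists n', (c + a * b ^ (j - K.+1).-1); split=> //.
have ej : j = (j - K.+1) + K.+1 by rewrite subnK // ltnW.
by rewrite {1}ej agen_addm // addnA e mulnDl addnA.
Qed.

Lemma inS_ap_decomp s : S s -> exists n c, n < r /\ s = ap_elt n + c * r.
Proof.
elim=> [|s' j j_gt0 _ [n [c [lt_n ->]]]].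
  by exists 0, 0; rewrite rb_gt0 // /ap_elt greedy0 !muln0.
have [n' [c' [lt_n' e]]] := ap_elt_add_agen j_gt0 lt_n.
by exists n', (c' + c); split=> //; rewrite addnAC e mulnDl addnA.
Qed.

Lemma Ap_ap_elt w : coprime r a -> Ap S w <-> exists2 n, n < r & w = ap_elt n.
Proof.
move=> co_ra; have r_mult := is_mult_rb a b (ltn0Sn K).
split=> [[Sw [m [m_mult not_Swm]]] | [n lt_n ->]].
  rewrite -(is_mult_uniq r_mult m_mult) in not_Swm.
  have [n [c [lt_n ew]]] := inS_ap_decomp Sw; exists n => //.
  case: c ew => [|c] ew; first by rewrite ew addn0.
  case: not_Swm; have -> : w - r = ap_elt n + c * r by rewrite ew mulSn; lia.
  by split; [rewrite ew mulSn; lia | apply: inS_addn; [exact: inS_greedy | exact: inS_mul_rb]].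
split; first exact: inS_greedy.
exists r; split=> // [[le_r Sr]].
have [n' [c [lt_n' e]]] := inS_ap_decomp Sr.
have e' : ap_elt n = ap_elt n' + c.+1 * r by rewrite mulSn; lia.
have /eqP : ap_elt n = ap_elt n' %[mod r] by rewrite e' addnC modnMDl.
rewrite /ap_elt ![r * _]mulnC !modnMDl eqn_modMl_coprime // !modn_small // => /eqP en.
by move: e'; rewrite en; lia.
Qed.

End Apery.

Lemma Ap_rvalue a b K w : 0 < b -> coprime (rb b K.+1) a ->
  Ap (inS a b K.+1) w <->
  exists2 u, inR b K.+1 u & w = rb b K.+1 * \sum_(2 <= j < K.+2) u j + a * rvalue b K u.
Proof.
move=> b_gt0 co_ra; rewrite Ap_ap_elt //; split=> [[n lt_n ->] | [u uR ->]].
  by have [u uR ->] := rvalue_onto lt_n; exists u; rewrite // /ap_elt greedy_rvalue.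
by exists (rvalue b K u); rewrite ?rvalue_lt // /ap_elt greedy_rvalue.
Qed.

Lemma sum_agen_rvalue a b K u :
  \sum_(2 <= j < K.+2) u j * agen a b K.+1 j + b ^ K.+1 * (\sum_(2 <= j < K.+2) u j)
    + u K.+2 * agen a b K.+2 K.+2 =
  rb b K.+2 * \sum_(2 <= j < K.+3) u j + a * rvalue b K.+1 u.
Proof.
have -> : \sum_(2 <= j < K.+2) u j * agen a b K.+1 j =
          rb b K.+1 * \sum_(2 <= j < K.+2) u j + a * rvalue b K u.
  by rewrite /rvalue !big_distrr -big_split; apply: eq_bigr => j _ /=; rewrite /agen; lia.
by rewrite rvalueS (big_nat_recr K.+2) // /agen (rbSr b K.+1) /=; lia.
Qed.

Lemma rvalue_top a b K u : u K.+2 = b -> (forall k, 2 <= k < K.+2 -> u k = 0) ->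
  rb b K.+2 * \sum_(2 <= j < K.+3) u j + a * rvalue b K.+1 u = b * agen a b K.+2 K.+2.
Proof.
move=> top_b low_zero; rewrite rvalueS (rvalue_eq0 _ _ _).2 // big_nat_recr //= top_b.
by rewrite big_nat_cond big1 => [|j /andP [/low_zero -> _]] //; rewrite /agen /=; lia.
Qed.

Theorem corollary18 (a b i : nat) :
  0 < a -> 1 < b -> 3 <= i -> coprime (rb b i) a ->
  forall w : nat,
    Ap (inS a b i) w <->
    (w = b * agen a b i i \/
     exists u : nat -> nat,
       inR b i.-1 u /\ u i < b /\
       w = \sum_(2 <= j < i) u j * agen a b i.-1 j
           + b ^ i.-1 * (\sum_(2 <= j < i) u j)
           + u i * agen a b i i).
Proof.
move=> _ b_gt1 + + w; have b_gt0 : 0 < b by apply: ltnW.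
case: i => [|[|[|K]]] // _ co_ra; rewrite Ap_rvalue //=.
split=> [[u uR ->] | [-> | [u [uR [lt_top ->]]]]].
- case/inRS: (uR) => uR' le_top top_zero; have [eq_top | ne_top] := eqVneq (u K.+3) b.
    by left; apply: (rvalue_top a eq_top (top_zero eq_top)).
  by right; exists u; rewrite sum_agen_rvalue ltn_neqAle ne_top.
- pose u j := if j == K.+3 then b else 0.
  have u_top : u K.+3 = b by rewrite /u eqxx.
  have u_low k : 2 <= k < K.+3 -> u k = 0 by rewrite /u; case: eqP => //; lia.
  exists u; last exact: esym (rvalue_top a u_top u_low).
  apply/inRS; split; [move=> j j_range | by rewrite u_top | by []].
  by rewrite u_low; [split=> // b0; lia | lia].
- exists u; last by rewrite sum_agen_rvalue.
  by apply/inRS; split=> [||eq_top]; [| apply: ltnW | rewrite eq_top ltnn in lt_top].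
Qed.
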